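(* Fix any strategies $g^{-i}=(g^j)_{j\ne i}$ of the players other than $i$, and any strategy $g^i$ of player $i$. Then there exists a strategy $s^i$ of player $i$ of the form $A^i_t\sim s^i_t(\cdot\mid a_{1:t-1},x^i_t)$ (depending on the private information only through the current type) such that $$P^{s^ig^{-i}}(X_t=x_t,A_t=a_t)=P^{g^ig^{-i}}(X_t=x_t,A_t=a_t)\quad\forall t\in\mathcal T,\ x_t\in\mathcal X,\ a_t\in\mathcal A,$$ and consequently $J^{i,s^ig^{-i}}=J^{i,g^ig^{-i}}$ (indeed $J^{j,s^ig^{-i}}=J^{j,g^ig^{-i}}$ for every player $j$).
   Context: Model: players $\mathcal N=\{1,\dots,N\}$, horizon $\mathcal T=\{1,\dots,T\}$. Player $i$ has a finite type set $\mathcal X^i$ and a finite action set $\mathcal A^i$; $\mathcal X=\times_i\mathcal X^i$, $\mathcal A=\times_i\mathcal A^i$. Types evolve as $P(x_1)=\prod_iQ^i_1(x^i_1)$ and $P(x_{t+1}\mid x_{1:t},a_{1:t})=\prod_iQ^i_{t+1}(x^i_{t+1}\mid x^i_t,a_t)$ for known kernels (each may depend on the full action profile $a_t$). Player $i$ privately observes its own types and all actions are public, so at time $t$ player $i$ knows $(a_{1:t-1},x^i_{1:t})$. A (general) strategy $g^i$ specifies $g^i_t(\cdot\mid a_{1:t-1},x^i_{1:t})\in\mathcal P(\mathcal A^i)$; given their information, players randomize independently. Player $i$ receives reward $R^i(x_t,a_t)$ at each time and $J^{i,g}=\mathbb E^g[\sum_{t=1}^TR^i(X_t,A_t)]$.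 $P^g$, $\mathbb E^g$ denote probability and expectation under profile $g$; $-i$ denotes all players except $i$. *)

From HB Require Import structures.
From mathcomp Require Import all_boot all_order all_algebra.
Set Implicit Arguments. Unset Strict Implicit. Unset Printing Implicit Defensive.
Import Order.TTheory GRing.Theory Num.Theory.
Local Open Scope ring_scope.

Section Game.
Variables (R : realFieldType) (N : nat).
Variables (X A : 'I_N -> finType).

Definition Xp := {dffun forall i : 'I_N, X i}.
Definition Ap := {dffun forall i : 'I_N, A i}.

(* Behavioural strategy of player i:
   g t a_{1:t-1} x^i_{1:t} a^i = g^i_t(a^i | a_{1:t-1}, x^i_{1:t}), t >= 1. *)
Definition strat (i : 'I_N) := nat -> seq Ap -> seq (X i) -> A i -> R.
Definition profile := forall i : 'I_N, strat i.

Definition valid_strat (i : 'I_N) (g : strat i) : Prop :=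
  forall t h xs, (forall a, 0 <= g t h xs a) /\ \sum_(a : A i) g t h xs a = 1.

Definition markov_strat (i : 'I_N) (g : strat i) : Prop :=
  forall t h xs ys x a, g t h (rcons xs x) a = g t h (rcons ys x) a.

(* Q1 i = Q^i_1 ;  Q i t x a x' = Q^i_t(x' | x, a)  (kernel producing the time-t type) *)
Variables (Q1 : forall i : 'I_N, X i -> R)
          (Q : forall i : 'I_N, nat -> X i -> Ap -> X i -> R).

Definition valid_kernels : Prop :=
  (forall i, (forall x, 0 <= @Q1 i x) /\ \sum_(x : X i) @Q1 i x = 1) /\
  (forall i t x a, (forall y, 0 <= @Q i t x a y) /\ \sum_(y : X i) @Q i t x a y = 1).

(* probability that the first steps are h, given time t and past px, pa *)
Fixpoint prob_aux (g : profile) (t : nat) (px : seq Xp) (pa : seq Ap)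
    (h : seq (Xp * Ap)) : R :=
  match h with
  | [::] => 1
  | (x, a) :: h' =>
      (match px, pa with
       | y :: ys, b :: bs =>
           \prod_(i < N) @Q i t (last y ys i) (last b bs) (x i)
       | _, _ => \prod_(i < N) @Q1 i (x i)
       end) *
      (\prod_(i < N) g i t pa [seq (z : Xp) i | z <- rcons px x] (a i)) *
      prob_aux g t.+1 (rcons px x) (rcons pa a) h'
  end.

Definition prob (g : profile) (h : seq (Xp * Ap)) : R := prob_aux g 1 [::] [::] h.

(* P^g(X_t = x, A_t = a), for t >= 1 *)
Definition marg (g : profile) (t : nat) (x : Xp) (a : Ap) : R :=
  \sum_(h : (t.-1).-tuple (Xp * Ap)) prob g (rcons h (x, a)).

Definition payoff (Rw : 'I_N -> Xp -> Ap -> R) (T : nat) (j : 'I_N) (g : profile) : R :=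
  \sum_(1 <= t < T.+1) \sum_(x : Xp) \sum_(a : Ap) Rw j x a * marg g t x a.

End Game.

(* The joint law of a history factorises into one factor per player, player j's
   factor depending only on j's own types and on the public actions.  Player i's
   factor, summed over i's past types with the public actions fixed, gives an
   unnormalised conditional law of i's current type given the public history;
   the Markov strategy s^i plays, at current type y, the average of g^i over the
   past types weighted by this conditional law.  By induction on time these
   type masses are the same under s^i and g^i, hence so are the masses of i's
   (type, action) pairs given the public history.  Since the other players'
   factors do not see i's types, summing the product over histories only
   involves these masses, so the time-t marginals and all payoffs coincide. *)
From HB Require Import structures.
From mathcomp Require Import all_boot all_order all_algebra.
Set Implicit Arguments. Unset Strict Implicit. Unset Printing Implicit Defensive.
Import Order.TTheory GRing.Theory Num.Theory.
Local Open Scope ring_scope.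

Lemma size_belast_tuple (T : Type) n (e : n.+1.-tuple T) :
  size (belast (thead e) (behead e)) == n.
Proof. by rewrite size_belast size_behead size_tuple. Qed.

Definition unrcons_tuple (T : Type) n (e : n.+1.-tuple T) : n.-tuple T * T :=
  (Tuple (size_belast_tuple e), last (thead e) (behead e)).

Lemma big_tuple_rcons (R : nmodType) (T : finType) n (F : n.+1.-tuple T -> R) :
  \sum_(e : n.+1.-tuple T) F e =
  \sum_(e : n.-tuple T) \sum_(p : T) F [tuple of rcons e p].
Proof.
rewrite pair_big /=.
rewrite (reindex (fun q : n.-tuple T * T => [tuple of rcons q.1 q.2])) //=.
exists (@unrcons_tuple T n) => [[t p] _|e _].
  have E := congr1 val (tuple_eta [tuple of rcons t p]); rewrite /= lastI in E.
  move/eqP: E; rewrite eq_sym eqseq_rcons => /andP[/eqP E1 /eqP E2].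
  by congr (_, _) => //; apply: val_inj.
by apply: val_inj => /=; rewrite -lastI; have := congr1 val (tuple_eta e).
Qed.

Lemma size_unzip2_tuple (S T : Type) n (e : n.-tuple (S * T)) : size (unzip2 e) = n.
Proof. by rewrite size_map size_tuple. Qed.

(* [D] splits as [E] times a complement: [proj] reads the [E]-part and
   [graft d e] overwrites it by [e].  If [w] only sees the complement and the
   class [cls] of the [E]-part, the sum depends on [f] only through its sums
   over the classes. *)
Lemma eq_sum_proj_mul (R : comPzRingType) (D E K : finType) (proj : D -> E)
    (cls : E -> K) (graft : D -> E -> D) (w : D -> R) (f1 f2 : E -> R) :
  (forall d e, proj (graft d e) = e) ->
  (forall d e e', graft (graft d e) e' = graft d e') ->
  (forall d, graft d (proj d) = d) ->
  (forall d e, cls e = cls (proj d) -> w (graft d e) = w d) ->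
  (forall k, \sum_(e | cls e == k) f1 e = \sum_(e | cls e == k) f2 e) ->
  \sum_d f1 (proj d) * w d = \sum_d f2 (proj d) * w d.
Proof.
move=> proj_graft graft_graft graft_proj w_graft eq_f.
pose W e := \sum_(d | proj d == e) w d.
have W_cls e e' : cls e = cls e' -> W e = W e'.
  move=> ee'; rewrite /W (reindex_onto (graft^~ e) (graft^~ e')); last first.
    by move=> d /eqP <-; rewrite graft_graft graft_proj.
  apply: eq_big => d.
    rewrite proj_graft eqxx graft_graft /=.
    by apply/eqP/eqP => [<-|<-]; rewrite ?proj_graft ?graft_proj.
  move=> /andP[_ /eqP dE]; apply: w_graft.
  by rewrite -dE proj_graft.
have by_classes f : \sum_d f (proj d) * w d =
    \sum_(k : K) \sum_(e | cls e == k) f e * W e.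
  rewrite (partition_big proj xpredT) //= (partition_big cls xpredT) //=.
  apply: eq_bigr => k _; apply: eq_bigr => e _.
  by rewrite /W mulr_sumr; apply: eq_bigr => d /eqP <-.
rewrite !by_classes; apply: eq_bigr => k _.
have [e0 /eqP e0k|no_e] := pickP (fun e => cls e == k); last by rewrite !big_pred0.
have W_e0 f : \sum_(e | cls e == k) f e * W e = (\sum_(e | cls e == k) f e) * W e0.
  by rewrite mulr_suml; apply: eq_bigr => e /eqP ek; rewrite (W_cls e e0) ?ek ?e0k.
by rewrite !W_e0 eq_f.
Qed.

Section Game.
Variables (R : realFieldType) (N : nat) (X A : 'I_N -> finType).
Variables (Q1 : forall i : 'I_N, X i -> R)
          (Q : forall i : 'I_N, nat -> X i -> Ap A -> X i -> R).

Definition type_kernel (j : 'I_N) t (px : seq (X j)) (pa : seq (Ap A)) (x : X j) : R :=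
  match px, pa with
  | y :: ys, b :: bs => Q t (last y ys) (last b bs) x
  | _, _ => Q1 x
  end.

Fixpoint own_prob (j : 'I_N) (gj : strat R X A j) t (px : seq (X j)) (pa : seq (Ap A))
    (h : seq (X j * Ap A)) : R :=
  match h with
  | [::] => 1
  | (x, a) :: h' => type_kernel t px pa x * gj t pa (rcons px x) (a j) *
                    own_prob gj t.+1 (rcons px x) (rcons pa a) h'
  end.

Definition own_step (j : 'I_N) (p : Xp X * Ap A) : X j * Ap A := (p.1 j, p.2).

Lemma prob_aux_prod (g : profile R X A) t px pa h :
  prob_aux Q1 Q g t px pa h =
  \prod_(j < N) own_prob (g j) t [seq (z : Xp X) j | z <- px] pa (map (@own_step j) h).
Proof.
elim: h t px pa => [|[x a] h IH] t px pa /=; first by rewrite big1.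
rewrite IH !big_split /=; congr (_ * _ * _).
- case: px => [|y ys] //; case: pa => [|b bs] //=.
  by apply: eq_bigr => j _; rewrite (last_map (fun z : Xp X => z j)).
- by apply: eq_bigr => j _; rewrite map_rcons.
- by apply: eq_bigr => j _; rewrite map_rcons.
Qed.

Lemma own_prob_rcons j (gj : strat R X A j) t px pa h p :
  own_prob gj t px pa (rcons h p) = own_prob gj t px pa h *
   (type_kernel (t + size h) (px ++ unzip1 h) (pa ++ unzip2 h) p.1 *
    gj (t + size h)%N (pa ++ unzip2 h) (rcons (px ++ unzip1 h) p.1) (p.2 j)).
Proof.
elim: h t px pa => [|[x a] h IH] t px pa /=.
  by case: p => x a; rewrite !cats0 addn0 mul1r mulr1.
by rewrite IH !mulrA -!cat_rcons addSnnS.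
Qed.

Lemma type_kernel_rcons j t (xs : seq (X j)) z (bs : seq (Ap A)) b y :
  type_kernel t (rcons xs z) (rcons bs b) y = Q t z b y.
Proof. by case: xs => [|x xs]; case: bs => [|c bs] //=; rewrite ?last_rcons. Qed.

Section Nonneg.
Variable (j : 'I_N).
Hypotheses (Q1_ge0 : forall x, 0 <= @Q1 j x) (Q_ge0 : forall t x a y, 0 <= @Q j t x a y).

Lemma type_kernel_ge0 t px pa y : 0 <= @type_kernel j t px pa y.
Proof. by rewrite /type_kernel; case: px => [|z zs]; case: pa. Qed.

Lemma own_prob_ge0 (gj : strat R X A j) t px pa h :
  valid_strat gj -> 0 <= own_prob gj t px pa h.
Proof.
move=> gj_valid; elim: h t px pa => [|[x a] h IH] t px pa //=.
rewrite !mulr_ge0 ?type_kernel_ge0 //; exact: (gj_valid _ _ _).1.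
Qed.

End Nonneg.

Section Markovize.
Variables (g : profile R X A) (i : 'I_N).
Arguments g : clear implicits.

Definition type_mass (gi : strat R X A i) n t (k : seq (Ap A)) (y : X i) : R :=
  \sum_(e : n.-tuple (X i * Ap A) | unzip2 e == k)
     own_prob gi 1 [::] [::] e * type_kernel t (unzip1 e) k y.

Definition step_mass (gi : strat R X A i) n (k : seq (Ap A)) (y : X i) (a : Ap A) : R :=
  \sum_(e : n.-tuple (X i * Ap A) | unzip2 e == k) own_prob gi 1 [::] [::] (rcons e (y, a)).

Definition action_mass n t (k : seq (Ap A)) (y : X i) (ai : A i) : R :=
  \sum_(e : n.-tuple (X i * Ap A) | unzip2 e == k)
     own_prob (g i) 1 [::] [::] e * type_kernel t (unzip1 e) k y *
     g i t k (rcons (unzip1 e) y) ai.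

(* When the type [y] has mass zero the choice of action is irrelevant; we then
   fall back on [g i] itself, which keeps the strategy a distribution. *)
Definition markovize : strat R X A i := fun t k xs ai =>
  if xs is z :: zs then
    let y := last z zs in
    if type_mass (g i) (size k) t k y == 0 then g i t k [:: y] ai
    else action_mass (size k) t k y ai / type_mass (g i) (size k) t k y
  else g i t k xs ai.

Lemma markovize_markov : markov_strat markovize.
Proof.
by move=> t h [|x1 xs] [|y1 ys] x a //=; rewrite ?last_rcons.
Qed.

Lemma markovize_rcons t k xs y ai :
  markovize t k (rcons xs y) ai =
  (if type_mass (g i) (size k) t k y == 0 then g i t k [:: y] ai
   else action_mass (size k) t k y ai / type_mass (g i) (size k) t k y).
Proof. by case: xs => [|x xs] //=; rewrite last_rcons. Qed.

Lemma step_massE (gi : strat R X A i) n k y a :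
  step_mass gi n k y a = \sum_(e : n.-tuple (X i * Ap A) | unzip2 e == k)
    own_prob gi 1 [::] [::] e *
    (type_kernel n.+1 (unzip1 e) k y * gi n.+1 k (rcons (unzip1 e) y) (a i)).
Proof. by apply: eq_bigr => e /eqP <-; rewrite own_prob_rcons /= size_tuple add1n. Qed.

Lemma type_mass_rcons (gi : strat R X A i) n t k b y :
  type_mass gi n.+1 t (rcons k b) y = \sum_(z : X i) step_mass gi n k z b * Q t z b y.
Proof.
rewrite /type_mass /step_mass big_mkcond big_tuple_rcons /=.
under [RHS]eq_bigr do rewrite big_distrl /=.
rewrite [RHS]exchange_big [RHS]big_mkcond; apply: eq_bigr => e _.
rewrite (eq_bigr (fun p : X i * Ap A =>
   if unzip2 e == k then (if p.2 == b then
     own_prob gi 1 [::] [::] (rcons e (p.1, p.2)) * Q t p.1 b y else 0) else 0));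
  last first.
  case=> z b0 _ /=; rewrite /unzip2 /unzip1 !map_rcons eqseq_rcons type_kernel_rcons.
  by case: (map snd e == k); case: (b0 == b).
case: ifP => ek; last exact: big1.
rewrite -(pair_big xpredT xpredT (fun z b' => if b' == b then
     own_prob gi 1 [::] [::] (rcons e (z, b')) * Q t z b y else 0)) /=.
by apply: eq_bigr => z _; rewrite -big_mkcond big_pred1_eq.
Qed.

Hypotheses (gi_valid : valid_strat (g i)) (Q1_ge0 : forall x, 0 <= @Q1 i x)
  (Q_ge0 : forall t x a y, 0 <= @Q i t x a y).

Lemma action_mass_ge0 n t k y ai : 0 <= action_mass n t k y ai.
Proof.
apply: sumr_ge0 => e _.
by rewrite !mulr_ge0 ?own_prob_ge0 ?type_kernel_ge0 ?(gi_valid _ _ _).1.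
Qed.

Lemma sum_action_mass n t k y : \sum_(ai : A i) action_mass n t k y ai = type_mass (g i) n t k y.
Proof.
rewrite /action_mass exchange_big /=; apply: eq_bigr => e _.
by rewrite -mulr_sumr (gi_valid _ _ _).2 mulr1.
Qed.

Lemma type_mass_ge0 n t k y : 0 <= type_mass (g i) n t k y.
Proof. by rewrite -sum_action_mass sumr_ge0 // => ai _; apply: action_mass_ge0. Qed.

Lemma markovize_valid : valid_strat markovize.
Proof.
move=> t k [|z zs] /=; first exact: gi_valid.
have [_|D_neq0] := eqVneq (type_mass (g i) (size k) t k (last z zs)) 0; first exact: gi_valid.
split=> [a|]; first by rewrite divr_ge0 ?action_mass_ge0 ?type_mass_ge0.
by rewrite -mulr_suml sum_action_mass mulfV.
Qed.

(* On a type of positive mass, [markovize] times the mass is [action_mass]. *)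
Lemma step_mass_markovize_of n :
  (forall k y, type_mass markovize n n.+1 k y = type_mass (g i) n n.+1 k y) ->
  forall k y a, step_mass markovize n k y a = step_mass (g i) n k y a.
Proof.
move=> eq_mass k y a.
have [szk|szk] := eqVneq (size k) n; last first.
  rewrite /step_mass !big_pred0 // => e; apply/negP => /eqP ek;
  by move: szk; rewrite -ek size_unzip2_tuple eqxx.
rewrite !step_massE.
under eq_bigr do rewrite markovize_rcons szk mulrA.
rewrite -mulr_suml -/(type_mass markovize n n.+1 k y) eq_mass.
under [RHS]eq_bigr do rewrite mulrA.
rewrite -/(action_mass n n.+1 k y (a i)).
have [D0|D_neq0] := eqVneq (type_mass (g i) n n.+1 k y) 0; last by rewrite mulrC divfK.
rewrite D0 mul0r; apply/esym.
apply: (psumr_eq0P (P := xpredT) (F := action_mass n n.+1 k y)) => //.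
  by move=> ai _; apply: action_mass_ge0.
by rewrite sum_action_mass.
Qed.

Lemma type_mass_markovize n t k y : type_mass markovize n t k y = type_mass (g i) n t k y.
Proof.
elim: n t k y => [|n IH] t k y.
  by apply: eq_bigr => e _; rewrite (size0nil (size_tuple e)).
case/lastP: k => [|k b].
  rewrite /type_mass !big_pred0 // => e; apply/negP => /eqP ek;
  by move: (size_unzip2_tuple e); rewrite ek.
rewrite !type_mass_rcons; apply: eq_bigr => z _.
by rewrite (step_mass_markovize_of (IH n.+1)).
Qed.

Lemma step_mass_markovize n k y a : step_mass markovize n k y a = step_mass (g i) n k y a.
Proof. exact/step_mass_markovize_of/type_mass_markovize. Qed.

End Markovize.

Section Graft.
Variables (i : 'I_N) (n : nat).
Implicit Types (d : n.-tuple (Xp X * Ap A)) (e : n.-tuple (X i * Ap A)).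

Definition set_own (x : Xp X) (y : X i) : Xp X := finfun (dfwith (fun k => x k) y).

Lemma set_own_at x y : set_own x y i = y.
Proof. by rewrite ffunE dfwith_in. Qed.

Lemma set_own_out x y j : i != j -> set_own x y j = x j.
Proof. by move=> ij; rewrite ffunE dfwith_out. Qed.

Lemma set_own_set_own x y y' : set_own (set_own x y) y' = set_own x y'.
Proof.
apply/ffunP => j; have [<-|ij] := eqVneq i j; first by rewrite !set_own_at.
by rewrite !set_own_out.
Qed.

Lemma set_own_id x : set_own x (x i) = x.
Proof.
apply/ffunP => j; have [<-|ij] := eqVneq i j; first by rewrite set_own_at.
by rewrite set_own_out.
Qed.

Definition own_part d : n.-tuple (X i * Ap A) := map_tuple (@own_step i) d.

Definition actions e : n.-tuple (Ap A) := map_tuple snd e.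

Definition graft d e : n.-tuple (Xp X * Ap A) :=
  [tuple (set_own (tnth d k).1 (tnth e k).1, (tnth e k).2) | k < n].

Lemma own_part_graft d e : own_part (graft d e) = e.
Proof.
apply: eq_from_tnth => k; rewrite tnth_map tnth_mktuple /own_step /= set_own_at.
by case: (tnth e k).
Qed.

Lemma graft_graft d e e' : graft (graft d e) e' = graft d e'.
Proof. by apply: eq_from_tnth => k; rewrite !tnth_mktuple /= set_own_set_own. Qed.

Lemma graft_own_part d : graft d (own_part d) = d.
Proof.
apply: eq_from_tnth => k; rewrite tnth_mktuple tnth_map /own_step /= set_own_id.
by case: (tnth d k).
Qed.

Lemma own_step_graft d e j : i != j -> actions e = actions (own_part d) ->
  map (@own_step j) (graft d e) = map (@own_step j) d.
Proof.
move=> ij eq_act.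
suff /(congr1 val) : map_tuple (@own_step j) (graft d e) = map_tuple (@own_step j) d by [].
apply: eq_from_tnth => k; rewrite !tnth_map tnth_ord_tuple /own_step /= set_own_out //.
by have := congr1 (fun u => tnth u k) eq_act; rewrite !tnth_map => ->.
Qed.

End Graft.

Section Marginals.
Variables (g : profile R X A) (i : 'I_N) (t : nat) (x : Xp X) (a : Ap A).
Arguments g : clear implicits.

Definition others_prob (h : seq (Xp X * Ap A)) : R :=
  \prod_(j < N | j != i) own_prob (g j) 1 [::] [::] (map (@own_step j) (rcons h (x, a))).

Lemma prob_rcons_split (G : profile R X A) (h : (t.-1).-tuple (Xp X * Ap A)) :
  (forall j, i != j -> G j = g j) ->
  prob Q1 Q G (rcons h (x, a)) =
  own_prob (G i) 1 [::] [::] (rcons (own_part i h) (x i, a)) * others_prob h.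
Proof.
move=> G_out; rewrite /prob prob_aux_prod (bigD1 i) //= map_rcons; congr (_ * _).
by apply: eq_bigr => j ji; rewrite G_out // eq_sym.
Qed.

Lemma others_prob_graft (d : (t.-1).-tuple (Xp X * Ap A)) (e : (t.-1).-tuple (X i * Ap A)) :
  actions e = actions (own_part i d) -> others_prob (graft d e) = others_prob d.
Proof.
move=> eq_act; apply: eq_bigr => j ji.
by rewrite -!cats1 !map_cat own_step_graft // eq_sym.
Qed.

Lemma marg_dfwith (gi : strat R X A i) :
  (forall k, step_mass gi t.-1 k (x i) a = step_mass (g i) t.-1 k (x i) a) ->
  marg Q1 Q (dfwith g gi) t x a = marg Q1 Q g t x a.
Proof.
move=> eq_step; rewrite /marg.
rewrite (eq_bigr _ (fun h _ => prob_rcons_split h (dfwith_out g gi))).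
rewrite [RHS](eq_bigr _ (fun h _ => prob_rcons_split h (fun j _ => erefl))) dfwith_in.
apply: (@eq_sum_proj_mul _ _ _ _ (@own_part i _) (@actions i _) (@graft i _) others_prob
  (fun e => own_prob gi 1 [::] [::] (rcons e (x i, a)))
  (fun e => own_prob (g i) 1 [::] [::] (rcons e (x i, a)))).
- exact: own_part_graft.
- exact: graft_graft.
- exact: graft_own_part.
- exact: others_prob_graft.
move=> k; have act_k (e : (t.-1).-tuple (X i * Ap A)) : (actions e == k) = (unzip2 e == val k).
  by rewrite -val_eqE.
rewrite !(eq_bigl _ _ act_k); exact: eq_step.
Qed.

End Marginals.

Definition markov_profile (g : profile R X A) (i : 'I_N) : profile R X A :=
  dfwith g (markovize g (i := i)).

End Game.

Theorem fact1 (R : realFieldType) (N T : nat) (X A : 'I_N -> finType)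
    (Q1 : forall i : 'I_N, X i -> R)
    (Q : forall i : 'I_N, nat -> X i -> Ap A -> X i -> R)
    (Rw : 'I_N -> Xp X -> Ap A -> R)
    (hQ : valid_kernels Q1 Q)
    (i : 'I_N) (g : profile R X A)
    (hg : forall j, valid_strat (g j)) :
  exists s : profile R X A,
    (forall j, j != i -> s j = g j) /\
    valid_strat (s i) /\ markov_strat (s i) /\
    (forall t, (1 <= t <= T)%N -> forall x a,
        marg Q1 Q s t x a = marg Q1 Q g t x a) /\
    (forall j, payoff Q1 Q Rw T j s = payoff Q1 Q Rw T j g).
Proof.
have [Q1_ge0 Q_ge0] := hQ.
have Q1i_ge0 x : 0 <= Q1 i x := (Q1_ge0 i).1 x.
have Qi_ge0 t x b y : 0 <= Q i t x b y := (Q_ge0 i t x b).1 y.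
have marg_eq t x a : marg Q1 Q (markov_profile Q1 Q g i) t x a = marg Q1 Q g t x a.
  by apply: marg_dfwith => k; apply: step_mass_markovize.
exists (markov_profile Q1 Q g i); rewrite /markov_profile dfwith_in.
split; first by move=> j ji; rewrite dfwith_out // eq_sym.
split; first exact: markovize_valid.
split; first exact: markovize_markov.
split=> [t _ x a|j]; first exact: marg_eq.
by apply: eq_bigr => t _; apply: eq_bigr => x _; apply: eq_bigr => a _; rewrite marg_eq.
Qed.
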